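(* Let $T\in B(H)$ with $T\ge0$, and let $(\lambda_k)_{k=1}^\infty\subset\operatorname{Int}_{\mathbb R}W_{\rm e}(T)$ with $(\lambda_k)_{k=1}^\infty\in\mathcal D(T)$. Then $\sum_{k=1}^\infty\lambda_k=\infty$.
   Context: $H$ is an infinite-dimensional complex separable Hilbert space. $W_{\rm e}(T)$ is the set of $\lambda\in\mathbb C$ with $\langle Tx_k,x_k\rangle\to\lambda$ for some orthonormal sequence $(x_k)$ (a subset of $\mathbb R$ for selfadjoint $T$); $\operatorname{Int}_{\mathbb R}$ is interior in $\mathbb R$. $\mathcal D(T)$ is the set of sequences $(\langle Tu_k,u_k\rangle)_{k\ge1}$ over orthonormal bases $(u_k)$ of $H$. *)

(* classical reals.  H is modelled concretely as l^2(N; C),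
   the (unique up to unitary isomorphism) infinite-dimensional separable
   complex Hilbert space.  Complex numbers are pairs of reals. *)
From Stdlib Require Import Reals.
Open Scope R_scope.

Definition C : Type := (R * R)%type.
Definition Cre (z : C) : R := fst z.
Definition Cim (z : C) : R := snd z.
Definition Cadd (z w : C) : C := (fst z + fst w, snd z + snd w).
Definition Cmul (z w : C) : C :=
  (fst z * fst w - snd z * snd w, fst z * snd w + snd z * fst w).
Definition Cconj (z : C) : C := (fst z, - snd z).
Definition Cnorm2 (z : C) : R := fst z * fst z + snd z * snd z.
Definition C0 : C := (0, 0).
Definition C1 : C := (1, 0).

Definition vec : Type := nat -> C.
Definition l2 (x : vec) : Prop :=
  exists s, infinite_sum (fun n => Cnorm2 (x n)) s.

Definition inner_is (x y : vec) (z : C) : Prop :=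
  infinite_sum (fun n => Cre (Cmul (x n) (Cconj (y n)))) (Cre z) /\
  infinite_sum (fun n => Cim (Cmul (x n) (Cconj (y n)))) (Cim z).

Definition bounded_operator (T : vec -> vec) : Prop :=
  (forall x, l2 x -> l2 (T x)) /\
  (forall x y, l2 x -> l2 y ->
     forall n, T (fun m => Cadd (x m) (y m)) n = Cadd (T x n) (T y n)) /\
  (forall (c : C) x, l2 x ->
     forall n, T (fun m => Cmul c (x m)) n = Cmul c (T x n)) /\
  (exists M, forall x s, infinite_sum (fun n => Cnorm2 (x n)) s ->
     forall N, sum_f_R0 (fun n => Cnorm2 (T x n)) N <= M * s).

Definition positive_operator (T : vec -> vec) : Prop :=
  forall x, l2 x -> forall z, inner_is (T x) x z -> Cim z = 0 /\ 0 <= Cre z.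

Definition orthonormal (u : nat -> vec) : Prop :=
  (forall k, l2 (u k)) /\
  (forall j k, inner_is (u j) (u k) (if Nat.eq_dec j k then C1 else C0)).

Definition orthonormal_basis (u : nat -> vec) : Prop :=
  orthonormal u /\
  (forall y, l2 y -> (forall k, inner_is y (u k) C0) -> forall n, y n = C0).

Definition Cseq_cv (a : nat -> C) (l : C) : Prop :=
  Un_cv (fun k => Cre (a k)) (Cre l) /\ Un_cv (fun k => Cim (a k)) (Cim l).

Definition essential_numerical_range (T : vec -> vec) (l : C) : Prop :=
  exists x : nat -> vec, orthonormal x /\
    exists a : nat -> C, (forall k, inner_is (T (x k)) (x k) (a k)) /\ Cseq_cv a l.

Definition real_interior (S : C -> Prop) (r : R) : Prop :=
  exists eps, 0 < eps /\ forall mu : R, Rabs (mu - r) < eps -> S (mu, 0).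

Definition diagonal_seq (T : vec -> vec) (d : nat -> C) : Prop :=
  exists u : nat -> vec, orthonormal_basis u /\
    forall k, inner_is (T (u k)) (u k) (d k).

(* H = l^2(N; C) is a real Hilbert space for Re <x, y>, and an orthonormal basis (u_k) of H
   yields the real orthonormal basis (e_k) = (u_0, i u_0, u_1, i u_1, ...), on which the
   diagonal of T is (λ_0, λ_0, λ_1, λ_1, ...).  Since λ_0 ≥ 0 lies in the interior of W_e(T),
   some c > 0 lies in W_e(T): <T x_n, x_n> → c for an orthonormal sequence (x_n).  If Σ λ_k
   were finite, choose K with Σ_{k>K} <T e_k, e_k> ≤ c/2.  By Parseval and the Cauchy–Schwarz
   inequality |<Tx, e_k>|² ≤ <Tx, x> <T e_k, e_k> for the positive form of T,
     <T x_n, x_n>² ≤ ‖T x_n‖² ≤ Σ_{k≤K} <T x_n, e_k>² + <T x_n, x_n> · c/2,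
   and each <T x_n, e_k> = <x_n, T e_k> tends to 0 by Bessel's inequality for (x_n).
   Letting n → ∞ gives c² ≤ c²/2, a contradiction. *)

From Stdlib Require Import Arith Reals Lia Psatz Classical FunctionalExtensionality.
From Coquelicot Require Import Coquelicot.
Open Scope R_scope.

Lemma ex_series_Rplus (a b : nat -> R) :
  ex_series a -> ex_series b -> ex_series (fun n => a n + b n).
Proof. exact (@ex_series_plus R_AbsRing R_NormedModule a b). Qed.

Lemma ex_series_Rscal (c : R) (a : nat -> R) : ex_series a -> ex_series (fun n => c * a n).
Proof. exact (@ex_series_scal_l R_AbsRing R_NormedModule c a). Qed.

Lemma ex_series_Rabs_le (a b : nat -> R) :
  (forall n, Rabs (a n) <= b n) -> ex_series b -> ex_series a.
Proof.
  intros Hab Hb. apply ex_series_Rabs.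
  apply (@ex_series_le R_AbsRing R_CompleteNormedModule _ b); auto.
  intros n. unfold norm; simpl. unfold abs; simpl. now rewrite Rabs_Rabsolu.
Qed.

Lemma sum_f_R0_nonneg (a : nat -> R) N : (forall n, 0 <= a n) -> 0 <= sum_f_R0 a N.
Proof. intros Ha; induction N; simpl; auto. specialize (Ha (S N)); lra. Qed.

Lemma sum_f_R0_le_index (a : nat -> R) N M :
  (forall n, 0 <= a n) -> (N <= M)%nat -> sum_f_R0 a N <= sum_f_R0 a M.
Proof. intros Ha H; induction H; [lra|]. rewrite tech5. specialize (Ha (S m)); lra. Qed.

Lemma sum_f_R0_diff_le (a b : nat -> R) N M :
  (N <= M)%nat -> (forall n, a n <= b n) ->
  sum_f_R0 a M - sum_f_R0 a N <= sum_f_R0 b M - sum_f_R0 b N.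
Proof. intros H Hab; induction H; [lra|]. rewrite !tech5. specialize (Hab (S m)); lra. Qed.

Lemma infinite_sum_partial_le (a : nat -> R) L :
  (forall n, 0 <= a n) -> infinite_sum a L -> forall N, sum_f_R0 a N <= L.
Proof.
  intros Ha HL. apply growing_ineq; auto.
  intros n; simpl. specialize (Ha (S n)); lra.
Qed.

Lemma infinite_sum_of_bounded_sums (a : nat -> R) B :
  (forall n, 0 <= a n) -> (forall N, sum_f_R0 a N <= B) ->
  exists L, infinite_sum a L /\ L <= B.
Proof.
  intros Ha HB. destruct (growing_cv (sum_f_R0 a)) as [L HL].
  - intros n; simpl. specialize (Ha (S n)); lra.
  - exists B. intros x [n ->]. auto.
  - exists L. split; auto.
    exact (is_lim_seq_le (sum_f_R0 a) (fun _ => B) L B HB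
             (proj2 (is_lim_seq_Reals _ _) HL) (is_lim_seq_const B)).
Qed.

Lemma bounded_sums_tail_small (a : nat -> R) B :
  (forall n, 0 <= a n) -> (forall N, sum_f_R0 a N <= B) ->
  forall d, 0 < d -> exists K, forall N, (K <= N)%nat -> forall M, (N <= M)%nat ->
    sum_f_R0 a M - sum_f_R0 a N <= d.
Proof.
  intros Ha HB d Hd. destruct (infinite_sum_of_bounded_sums a B Ha HB) as [L [HL _]].
  destruct (HL d Hd) as [K HK]. exists K. intros N HN M HM.
  pose proof (infinite_sum_partial_le a L Ha HL M).
  specialize (HK N HN). unfold Rdist in HK. apply Rabs_def2 in HK. lra.
Qed.

Lemma is_lim_seq_sum_f_R0 (a : nat -> nat -> R) (l : nat -> R) :
  (forall k, is_lim_seq (fun n => a n k) (l k)) ->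
  forall K, is_lim_seq (fun n => sum_f_R0 (a n) K) (sum_f_R0 l K).
Proof.
  intros Ha K; induction K; simpl; auto.
  apply (is_lim_seq_plus' _ _ _ _ IHK (Ha (S K))).
Qed.

Lemma growing_cv_infty_or_bounded (s : nat -> R) :
  Un_growing s -> cv_infty s \/ exists B, forall N, s N <= B.
Proof.
  intros Hs. destruct (classic (exists B, forall N, s N <= B)) as [|Hunb]; [now right|left].
  intros M. apply NNPP. intros HM. apply Hunb. exists M. intros N. apply Rnot_lt_le. intros HN.
  apply HM. exists N. intros n Hn. apply Rlt_le_trans with (1 := HN).
  now apply Rge_le, growing_prop.
Qed.

Definition rdot (x y : vec) (n : nat) : R := fst (x n) * fst (y n) + snd (x n) * snd (y n).
Definition rinner (x y : vec) : R := Series (rdot x y).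

Definition vadd (x y : vec) : vec := fun m => Cadd (x m) (y m).
Definition vscal (a : R) (x : vec) : vec := fun m => Cmul (a, 0) (x m).
Definition vmuli (x : vec) : vec := fun m => Cmul (0, 1) (x m).
Definition vsub (x y : vec) : vec := vadd x (vscal (-1) y).

Lemma l2_ex_series x : l2 x <-> ex_series (fun n => Cnorm2 (x n)).
Proof. split; intros [s Hs]; exists s; now apply is_series_Reals. Qed.

Lemma Cnorm2_ge_0 z : 0 <= Cnorm2 z.
Proof. destruct z; unfold Cnorm2; simpl; nra. Qed.

Lemma ex_series_rdot x y : l2 x -> l2 y -> ex_series (rdot x y).
Proof.
  intros Hx%l2_ex_series Hy%l2_ex_series.
  apply (ex_series_Rabs_le _ (fun n => /2 * (Cnorm2 (x n) + Cnorm2 (y n)))).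
  - intros n. unfold rdot, Cnorm2. destruct (x n) as [a b], (y n) as [c d]; simpl.
    pose proof (pow2_ge_0 (a + c)); pose proof (pow2_ge_0 (a - c));
    pose proof (pow2_ge_0 (b + d)); pose proof (pow2_ge_0 (b - d)).
    apply Rabs_le; split; nra.
  - now apply ex_series_Rscal, ex_series_Rplus.
Qed.

Lemma is_series_rinner x y : l2 x -> l2 y -> is_series (rdot x y) (rinner x y).
Proof. intros; now apply Series_correct, ex_series_rdot. Qed.

Lemma l2_vadd x y : l2 x -> l2 y -> l2 (vadd x y).
Proof.
  intros Hx%l2_ex_series Hy%l2_ex_series. apply l2_ex_series.
  apply (ex_series_Rabs_le _ (fun n => 2 * (Cnorm2 (x n) + Cnorm2 (y n)))).
  - intros n. unfold vadd, Cadd, Cnorm2. destruct (x n) as [a b], (y n) as [c d]; simpl.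
    pose proof (pow2_ge_0 (a + c)); pose proof (pow2_ge_0 (a - c));
    pose proof (pow2_ge_0 (b + d)); pose proof (pow2_ge_0 (b - d)).
    apply Rabs_le; split; nra.
  - now apply ex_series_Rscal, ex_series_Rplus.
Qed.

Lemma l2_vscal a x : l2 x -> l2 (vscal a x).
Proof.
  intros Hx%l2_ex_series. apply l2_ex_series.
  apply (ex_series_ext (fun n => (a * a) * Cnorm2 (x n))); [|now apply ex_series_Rscal].
  intros n. unfold vscal, Cmul, Cnorm2. destruct (x n); simpl; ring.
Qed.

Lemma l2_vmuli x : l2 x -> l2 (vmuli x).
Proof.
  intros Hx%l2_ex_series. apply l2_ex_series. revert Hx. apply ex_series_ext.
  intros n. unfold vmuli, Cmul, Cnorm2. destruct (x n); simpl; ring.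
Qed.

Lemma l2_vsub x y : l2 x -> l2 y -> l2 (vsub x y).
Proof. intros; now apply l2_vadd, l2_vscal. Qed.

#[local] Hint Resolve l2_vadd l2_vscal l2_vmuli l2_vsub : l2.

Lemma rinner_sym x y : rinner x y = rinner y x.
Proof. apply Series_ext. intros n. unfold rdot; ring. Qed.

Lemma rinner_vadd_l x y z : l2 x -> l2 y -> l2 z ->
  rinner (vadd x y) z = rinner x z + rinner y z.
Proof.
  intros. unfold rinner. rewrite <- Series_plus by now apply ex_series_rdot.
  apply Series_ext. intros n. unfold rdot, vadd, Cadd. destruct (x n), (y n); simpl; ring.
Qed.

Lemma rinner_vscal_l a x z : rinner (vscal a x) z = a * rinner x z.
Proof.
  unfold rinner. rewrite <- Series_scal_l. apply Series_ext.
  intros n. unfold rdot, vscal, Cmul. destruct (x n); simpl; ring.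
Qed.

Lemma rinner_vsub_l x y z : l2 x -> l2 y -> l2 z ->
  rinner (vsub x y) z = rinner x z - rinner y z.
Proof. intros. unfold vsub. rewrite rinner_vadd_l, rinner_vscal_l by auto with l2. ring. Qed.

Lemma rinner_vadd_r x y z : l2 x -> l2 y -> l2 z ->
  rinner z (vadd x y) = rinner z x + rinner z y.
Proof. intros. rewrite !(rinner_sym z). now apply rinner_vadd_l. Qed.

Lemma rinner_vscal_r a x z : rinner z (vscal a x) = a * rinner z x.
Proof. rewrite !(rinner_sym z). apply rinner_vscal_l. Qed.

Lemma rinner_vsub_r x y z : l2 x -> l2 y -> l2 z ->
  rinner z (vsub x y) = rinner z x - rinner z y.
Proof. intros. rewrite !(rinner_sym z). now apply rinner_vsub_l. Qed.

Lemma rinner_vmuli x y : rinner (vmuli x) (vmuli y) = rinner x y.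
Proof.
  apply Series_ext. intros n. unfold rdot, vmuli, Cmul. destruct (x n), (y n); simpl; ring.
Qed.

Lemma rinner_vmuli_l x y : rinner (vmuli x) y = - rinner x (vmuli y).
Proof.
  unfold rinner. rewrite <- Series_opp. apply Series_ext.
  intros n. unfold rdot, vmuli, Cmul. destruct (x n), (y n); simpl; ring.
Qed.

Lemma sum_Cnorm2_le_rinner x P : l2 x -> sum_f_R0 (fun m => Cnorm2 (x m)) P <= rinner x x.
Proof.
  intros Hx. apply infinite_sum_partial_le; [intros n; apply Cnorm2_ge_0|].
  now apply is_series_Reals, is_series_rinner.
Qed.

Lemma Cnorm2_le_rinner x m : l2 x -> Cnorm2 (x m) <= rinner x x.
Proof.
  intros Hx. eapply Rle_trans; [|apply (sum_Cnorm2_le_rinner x m Hx)].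
  destruct m; simpl; [apply Rle_refl|].
  pose proof (sum_f_R0_nonneg (fun n => Cnorm2 (x n)) m (fun n => Cnorm2_ge_0 (x n))). lra.
Qed.

Lemma rinner_self_ge_0 x : l2 x -> 0 <= rinner x x.
Proof. intros Hx. eapply Rle_trans; [apply Cnorm2_ge_0|]. apply (Cnorm2_le_rinner x 0 Hx). Qed.

Lemma quadratic_nonneg_discriminant a b c :
  0 <= c -> (forall t, 0 <= a - 2 * t * b + t * t * c) -> b * b <= a * c.
Proof.
  intros Hc H. destruct (Rle_lt_or_eq_dec 0 c Hc) as [Hc'|<-].
  - specialize (H (b / c)).
    replace (a - 2 * (b / c) * b + b / c * (b / c) * c) with ((a * c - b * b) / c) in H
      by (field; lra).
    apply Rmult_le_compat_r with (r := c) in H; [|lra].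
    unfold Rdiv in H. rewrite Rmult_assoc, Rinv_l in H; lra.
  - destruct (Req_dec b 0) as [->|Hb]; [lra|].
    specialize (H ((a + 1) / (2 * b))).
    replace (a - 2 * ((a + 1) / (2 * b)) * b + (a + 1) / (2 * b) * ((a + 1) / (2 * b)) * 0)
      with (-1) in H by (field; auto). lra.
Qed.

Lemma rinner_cauchy_schwarz x y : l2 x -> l2 y ->
  rinner x y * rinner x y <= rinner x x * rinner y y.
Proof.
  intros Hx Hy. apply quadratic_nonneg_discriminant; [now apply rinner_self_ge_0|].
  intros t. replace (rinner x x - 2 * t * rinner x y + t * t * rinner y y)
    with (rinner (vsub x (vscal t y)) (vsub x (vscal t y))).
  - apply rinner_self_ge_0; auto with l2.
  - rewrite rinner_vsub_l, !rinner_vsub_r, !rinner_vscal_l, !rinner_vscal_r, (rinner_sym y x)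
      by auto with l2. ring.
Qed.

Lemma inner_is_rinner x y z : l2 x -> l2 y -> inner_is x y z ->
  Cre z = rinner x y /\ Cim z = rinner x (vmuli y).
Proof.
  intros Hx Hy [Hre Him]. apply is_series_Reals in Hre, Him.
  split; symmetry; apply is_series_unique;
    [revert Hre | revert Him]; apply is_series_ext; intros n;
    unfold Cre, Cim, Cmul, Cconj, rdot, vmuli; destruct (x n), (y n); simpl; ring.
Qed.

Lemma inner_is_of_rinner x y : l2 x -> l2 y -> inner_is x y (rinner x y, rinner x (vmuli y)).
Proof.
  intros Hx Hy. split; simpl; apply is_series_Reals.
  - apply (is_series_ext (rdot x y)); [|now apply is_series_rinner].
    intros n. unfold Cre, Cmul, Cconj, rdot. destruct (x n), (y n); simpl; ring.
  - apply (is_series_ext (rdot x (vmuli y))); [|apply is_series_rinner; auto with l2].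
    intros n. unfold Cim, Cmul, Cconj, rdot, vmuli. destruct (x n), (y n); simpl; ring.
Qed.

Lemma vsub_fst x y m : fst (vsub x y m) = fst (x m) - fst (y m).
Proof. unfold vsub, vadd, vscal, Cadd, Cmul; simpl; ring. Qed.

Lemma vsub_snd x y m : snd (vsub x y m) = snd (x m) - snd (y m).
Proof. unfold vsub, vadd, vscal, Cadd, Cmul; simpl; ring. Qed.

Lemma vadd_vsub x y : vadd (vsub x y) y = x.
Proof.
  apply functional_extensionality. intros m. unfold vadd, vsub, vscal, Cadd, Cmul.
  apply injective_projections; simpl; ring.
Qed.

Lemma vsub_eq_C0 x y : (forall m, vsub x y m = C0) -> x = y.
Proof.
  intros H. apply functional_extensionality. intros m. specialize (H m).
  pose proof (f_equal fst H) as H1. pose proof (f_equal snd H) as H2.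
  rewrite vsub_fst in H1. rewrite vsub_snd in H2. simpl in H1, H2.
  apply injective_projections; lra.
Qed.

Lemma is_lim_seq_Cnorm2_vsub (x : nat -> vec) (y z : vec) m :
  is_lim_seq (fun n => fst (x n m)) (fst (y m)) ->
  is_lim_seq (fun n => snd (x n m)) (snd (y m)) ->
  is_lim_seq (fun n => Cnorm2 (vsub (x n) z m)) (Cnorm2 (vsub y z m)).
Proof.
  intros H1 H2. unfold Cnorm2. rewrite vsub_fst, vsub_snd.
  apply (is_lim_seq_ext (fun n => (fst (x n m) - fst (z m)) * (fst (x n m) - fst (z m)) +
                                  (snd (x n m) - snd (z m)) * (snd (x n m) - snd (z m)))).
  { intros n. now rewrite vsub_fst, vsub_snd. }
  apply is_lim_seq_plus'; apply is_lim_seq_mult'; apply is_lim_seq_minus'; auto;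
    apply is_lim_seq_const.
Qed.

Lemma is_lim_seq_of_sq_dist_tail (u s : nat -> R) :
  (forall d, 0 < d ->
     exists K, forall N, (K <= N)%nat -> forall M, (N <= M)%nat -> s M - s N <= d) ->
  (forall N M, (N <= M)%nat -> (u M - u N) * (u M - u N) <= s M - s N) ->
  is_lim_seq u (real (Lim_seq u)).
Proof.
  intros Hs Hu. destruct (proj2 (ex_lim_seq_cauchy_corr u)) as [l Hl].
  - intros eps. pose proof (cond_pos eps) as Heps.
    destruct (Hs (eps * eps / 2)) as [K HK]; [nra|]. exists K.
    assert (Hle : forall N, (K <= N)%nat -> forall M, (N <= M)%nat -> Rabs (u M - u N) < eps).
    { intros N HN M HM. rewrite <- (Rabs_pos_eq eps) by lra. apply Rsqr_lt_abs_0.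
      specialize (HK N HN M HM). specialize (Hu N M HM). unfold Rsqr. nra. }
    intros N M HN HM. destruct (Nat.le_ge_cases N M).
    + rewrite Rabs_minus_sym. auto.
    + auto.
  - now rewrite (is_lim_seq_unique _ _ Hl).
Qed.

Definition real_orthonormal (e : nat -> vec) : Prop :=
  (forall k, l2 (e k)) /\ (forall j k, rinner (e j) (e k) = if Nat.eq_dec j k then 1 else 0).

Definition real_total (e : nat -> vec) : Prop :=
  forall y, l2 y -> (forall k, rinner y (e k) = 0) -> forall m, y m = C0.

Fixpoint vsum (f : nat -> vec) (N : nat) : vec :=
  match N with O => f O | S n => vadd (vsum f n) (f (S n)) end.

Definition coef (e : nat -> vec) (v : vec) (k : nat) : R := rinner v (e k).

Definition partial_expansion (e : nat -> vec) (v : vec) (N : nat) : vec :=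
  vsum (fun k => vscal (coef e v k) (e k)) N.

Definition bessel_sum (e : nat -> vec) (v : vec) (N : nat) : R :=
  sum_f_R0 (fun k => coef e v k * coef e v k) N.

(* Coordinatewise limit of the partial expansions; [real (Lim_seq _)] is junk unless the
   limit exists, which [is_lim_seq_partial_expansion] establishes. *)
Definition expansion (e : nat -> vec) (v : vec) : vec := fun m =>
  (real (Lim_seq (fun N => fst (partial_expansion e v N m))),
   real (Lim_seq (fun N => snd (partial_expansion e v N m)))).

Lemma l2_vsum f N : (forall j, l2 (f j)) -> l2 (vsum f N).
Proof. intros H; induction N; simpl; auto with l2. Qed.

Lemma rinner_vsum_l f N z : (forall j, l2 (f j)) -> l2 z ->
  rinner (vsum f N) z = sum_f_R0 (fun j => rinner (f j) z) N.
Proof.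
  intros Hf Hz; induction N; simpl; auto.
  rewrite rinner_vadd_l, IHN by auto using l2_vsum. reflexivity.
Qed.

Lemma bessel_sum_le_index e v N M : (N <= M)%nat -> bessel_sum e v N <= bessel_sum e v M.
Proof. apply sum_f_R0_le_index. intros; apply Rle_0_sqr. Qed.

Section Expansion.

Variable e : nat -> vec.
Hypothesis He : real_orthonormal e.

Let l2_e k : l2 (e k).
Proof. apply He. Qed.
#[local] Hint Resolve l2_e : l2.

Lemma l2_partial_expansion v N : l2 (partial_expansion e v N).
Proof. apply l2_vsum. auto with l2. Qed.
#[local] Hint Resolve l2_partial_expansion : l2.

Lemma rinner_partial_expansion_l v N z : l2 z ->
  rinner (partial_expansion e v N) z = sum_f_R0 (fun j => coef e v j * rinner (e j) z) N.
Proof.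
  intros Hz. unfold partial_expansion. rewrite rinner_vsum_l by auto with l2.
  apply sum_eq. intros; apply rinner_vscal_l.
Qed.

Lemma rinner_partial_expansion_e v N k :
  rinner (partial_expansion e v N) (e k) = if le_dec k N then coef e v k else 0.
Proof.
  rewrite rinner_partial_expansion_l by auto with l2.
  induction N as [|N IH]; simpl.
  - rewrite (proj2 He). destruct (Nat.eq_dec 0 k), (le_dec k 0); subst; try lia; ring.
  - rewrite IH, (proj2 He).
    destruct (Nat.eq_dec (S N) k), (le_dec k N), (le_dec k (S N)); subst; try lia; ring.
Qed.

Lemma rinner_partial_expansion_r v N z : l2 z ->
  rinner z (partial_expansion e v N) = sum_f_R0 (fun j => coef e v j * rinner z (e j)) N.
Proof.
  intros Hz. rewrite rinner_sym, rinner_partial_expansion_l by auto.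
  apply sum_eq. intros; now rewrite rinner_sym.
Qed.

Lemma rinner_partial_expansions v N M : (N <= M)%nat ->
  rinner (partial_expansion e v N) (partial_expansion e v M) = bessel_sum e v N.
Proof.
  intros HNM. rewrite rinner_partial_expansion_l by auto with l2.
  apply sum_eq. intros j Hj. rewrite rinner_sym, rinner_partial_expansion_e.
  destruct (le_dec j M); [reflexivity|lia].
Qed.

Lemma bessel_identity v N : l2 v ->
  rinner (vsub v (partial_expansion e v N)) (vsub v (partial_expansion e v N)) =
  rinner v v - bessel_sum e v N.
Proof.
  intros Hv. rewrite rinner_vsub_l, !rinner_vsub_r by auto with l2.
  rewrite (rinner_sym (partial_expansion e v N) v), rinner_partial_expansion_r by auto.
  rewrite rinner_partial_expansions by lia. unfold bessel_sum, coef. ring.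
Qed.

Lemma bessel_inequality v N : l2 v -> bessel_sum e v N <= rinner v v.
Proof.
  intros Hv. assert (Hd : l2 (vsub v (partial_expansion e v N))) by auto with l2.
  pose proof (rinner_self_ge_0 _ Hd) as H. rewrite bessel_identity in H by auto. lra.
Qed.

Lemma partial_expansion_dist v N M : l2 v -> (N <= M)%nat ->
  rinner (vsub (partial_expansion e v M) (partial_expansion e v N))
         (vsub (partial_expansion e v M) (partial_expansion e v N)) =
  bessel_sum e v M - bessel_sum e v N.
Proof.
  intros Hv HNM. rewrite rinner_vsub_l, !rinner_vsub_r by auto with l2.
  rewrite (rinner_sym (partial_expansion e v M) (partial_expansion e v N)).
  rewrite !rinner_partial_expansions by lia. ring.
Qed.

Lemma bessel_sum_tail_small v : l2 v -> forall d, 0 < d ->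
  exists K, forall N, (K <= N)%nat -> forall M, (N <= M)%nat ->
    bessel_sum e v M - bessel_sum e v N <= d.
Proof.
  intros Hv. apply (bounded_sums_tail_small _ (rinner v v)).
  - intros; apply Rle_0_sqr.
  - intros N; now apply bessel_inequality.
Qed.

Lemma bessel_coef_sq_cv0 v : l2 v -> is_lim_seq (fun k => coef e v k * coef e v k) 0.
Proof.
  intros Hv. destruct (infinite_sum_of_bounded_sums _ (rinner v v) (fun k => Rle_0_sqr (coef e v k))
    (fun N => bessel_inequality v N Hv)) as [L [HL _]].
  apply ex_series_lim_0. exists L. now apply is_series_Reals.
Qed.

Lemma is_lim_seq_partial_expansion v m : l2 v ->
  is_lim_seq (fun N => fst (partial_expansion e v N m)) (fst (expansion e v m)) /\
  is_lim_seq (fun N => snd (partial_expansion e v N m)) (snd (expansion e v m)).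
Proof.
  intros Hv.
  assert (Hcoord : forall N M, (N <= M)%nat ->
    Cnorm2 (vsub (partial_expansion e v M) (partial_expansion e v N) m) <=
    bessel_sum e v M - bessel_sum e v N).
  { intros N M HNM. rewrite <- partial_expansion_dist by auto.
    apply Cnorm2_le_rinner; auto with l2. }
  split; apply (is_lim_seq_of_sq_dist_tail _ (bessel_sum e v) (bessel_sum_tail_small v Hv));
    intros N M HNM; specialize (Hcoord N M HNM); unfold Cnorm2 in Hcoord;
    rewrite vsub_fst, vsub_snd in Hcoord;
    pose proof (Rle_0_sqr (fst (partial_expansion e v M m) - fst (partial_expansion e v N m)));
    pose proof (Rle_0_sqr (snd (partial_expansion e v M m) - snd (partial_expansion e v N m)));
    unfold Rsqr in *; lra.
Qed.

Lemma expansion_tail_le v N d : l2 v ->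
  (forall M, (N <= M)%nat -> bessel_sum e v M - bessel_sum e v N <= d) ->
  l2 (vsub (expansion e v) (partial_expansion e v N)) /\
  rinner (vsub (expansion e v) (partial_expansion e v N))
         (vsub (expansion e v) (partial_expansion e v N)) <= d.
Proof.
  intros Hv Hd. set (r := vsub (expansion e v) (partial_expansion e v N)).
  assert (Hsum : forall P, sum_f_R0 (fun m => Cnorm2 (r m)) P <= d).
  { intros P.
    set (rM := fun M => vsub (partial_expansion e v M) (partial_expansion e v N)).
    assert (Hlim : is_lim_seq (fun M => sum_f_R0 (fun m => Cnorm2 (rM M m)) P)
                              (sum_f_R0 (fun m => Cnorm2 (r m)) P)).
    { apply (is_lim_seq_sum_f_R0 (fun M m => Cnorm2 (rM M m))). intros m.
      apply is_lim_seq_Cnorm2_vsub; apply is_lim_seq_partial_expansion, Hv. }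
    assert (Hev : eventually (fun M => sum_f_R0 (fun m => Cnorm2 (rM M m)) P <= d)).
    { exists N. intros M HM. apply Rle_trans with (2 := Hd M HM). unfold rM.
      rewrite <- partial_expansion_dist by auto. apply sum_Cnorm2_le_rinner; auto with l2. }
    exact (is_lim_seq_le_loc _ _ _ _ Hev Hlim (is_lim_seq_const d)). }
  destruct (infinite_sum_of_bounded_sums _ d (fun m => Cnorm2_ge_0 (r m)) Hsum) as [L [HL HLd]].
  assert (Hr : l2 r) by (now exists L).
  split; auto. unfold rinner. rewrite (is_series_unique _ L); auto.
  now apply is_series_Reals.
Qed.

Lemma l2_expansion v : l2 v -> l2 (expansion e v).
Proof.
  intros Hv. destruct (bessel_sum_tail_small v Hv 1 Rlt_0_1) as [K HK].
  destruct (expansion_tail_le v K 1 Hv (HK K (le_n K))) as [Hr _].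
  rewrite <- (vadd_vsub (expansion e v) (partial_expansion e v K)). auto with l2.
Qed.

Hypothesis Htot : real_total e.

Lemma expansion_eq v : l2 v -> expansion e v = v.
Proof.
  intros Hv. symmetry. apply vsub_eq_C0, Htot; [auto using l2_expansion with l2|].
  intros k. apply Rsqr_eq_0, Rle_antisym; [|apply Rle_0_sqr].
  apply Rle_plus_epsilon. intros d Hd. rewrite Rplus_0_l.
  destruct (bessel_sum_tail_small v Hv d Hd) as [K HK].
  set (N := Nat.max K k).
  destruct (expansion_tail_le v N d Hv (HK N (Nat.le_max_l K k))) as [Hr Hrd].
  (* For k <= N, v and its partial expansion have the same k-th coefficient. *)
  replace (rinner (vsub v (expansion e v)) (e k))
    with (- rinner (vsub (expansion e v) (partial_expansion e v N)) (e k)).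
  - pose proof (rinner_cauchy_schwarz _ _ Hr (l2_e k)) as Hcs.
    rewrite (proj2 He) in Hcs. destruct (Nat.eq_dec k k); [|lia]. unfold Rsqr. nra.
  - rewrite !rinner_vsub_l by auto using l2_expansion with l2.
    rewrite rinner_partial_expansion_e. destruct (le_dec k N); [unfold coef; ring|lia].
Qed.

Lemma parseval v : l2 v -> forall d, 0 < d -> exists N, rinner v v <= bessel_sum e v N + d.
Proof.
  intros Hv d Hd. destruct (bessel_sum_tail_small v Hv d Hd) as [K HK]. exists K.
  destruct (expansion_tail_le v K d Hv (HK K (le_n K))) as [_ HKd].
  rewrite expansion_eq, bessel_identity in HKd by auto. lra.
Qed.

End Expansion.

Lemma vmuli_vadd x y : vmuli (vadd x y) = vadd (vmuli x) (vmuli y).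
Proof.
  apply functional_extensionality. intros m. unfold vmuli, vadd, Cadd, Cmul.
  apply injective_projections; simpl; ring.
Qed.

Lemma vmuli_vmuli x : vmuli (vmuli x) = vscal (-1) x.
Proof.
  apply functional_extensionality. intros m. unfold vmuli, vscal, Cmul.
  apply injective_projections; simpl; ring.
Qed.

Section PositiveOperator.

Variable T : vec -> vec.
Hypothesis HT : bounded_operator T.
Hypothesis HP : positive_operator T.

Lemma l2_T x : l2 x -> l2 (T x).
Proof. apply HT. Qed.
#[local] Hint Resolve l2_T : l2.

Lemma T_vadd x y : l2 x -> l2 y -> T (vadd x y) = vadd (T x) (T y).
Proof. intros Hx Hy. apply functional_extensionality. intros n. now apply HT. Qed.

Lemma T_vscal a x : l2 x -> T (vscal a x) = vscal a (T x).
Proof. intros Hx. apply functional_extensionality. intros n. now apply HT. Qed.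

Lemma T_vmuli x : l2 x -> T (vmuli x) = vmuli (T x).
Proof. intros Hx. apply functional_extensionality. intros n. now apply HT. Qed.

Lemma T_vsub x y : l2 x -> l2 y -> T (vsub x y) = vsub (T x) (T y).
Proof. intros. unfold vsub. now rewrite T_vadd, T_vscal by auto with l2. Qed.

Lemma positive_rinner_ge_0 x : l2 x -> 0 <= rinner (T x) x.
Proof.
  intros Hx. exact (proj2 (HP x Hx _ (inner_is_of_rinner _ _ (l2_T x Hx) Hx))).
Qed.

Lemma positive_rinner_vmuli x : l2 x -> rinner (T x) (vmuli x) = 0.
Proof.
  intros Hx. exact (proj1 (HP x Hx _ (inner_is_of_rinner _ _ (l2_T x Hx) Hx))).
Qed.

(* The form (x, y) |-> Re <T x, y> is symmetric because <T z, z> is real for z = x + i y. *)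
Lemma positive_rinner_sym x y : l2 x -> l2 y -> rinner (T x) y = rinner (T y) x.
Proof.
  intros Hx Hy.
  pose proof (positive_rinner_vmuli _ (l2_vadd _ _ Hx (l2_vmuli _ Hy))) as H.
  rewrite T_vadd, T_vmuli, vmuli_vadd, vmuli_vmuli in H by auto with l2.
  rewrite rinner_vadd_l, !rinner_vadd_r, !rinner_vscal_r, rinner_vmuli in H by auto with l2.
  rewrite rinner_vmuli_l, !positive_rinner_vmuli in H by auto.
  lra.
Qed.

Lemma positive_cauchy_schwarz x y : l2 x -> l2 y ->
  rinner (T x) y * rinner (T x) y <= rinner (T x) x * rinner (T y) y.
Proof.
  intros Hx Hy. apply quadratic_nonneg_discriminant; [now apply positive_rinner_ge_0|].
  intros t. replace (rinner (T x) x - 2 * t * rinner (T x) y + t * t * rinner (T y) y)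
    with (rinner (T (vsub x (vscal t y))) (vsub x (vscal t y))).
  - apply positive_rinner_ge_0; auto with l2.
  - rewrite T_vsub, T_vscal by auto with l2.
    rewrite rinner_vsub_l, !rinner_vsub_r, !rinner_vscal_l, !rinner_vscal_r by auto with l2.
    rewrite (positive_rinner_sym y x) by auto. ring.
Qed.

End PositiveOperator.

Section SummableDiagonal.

Variable T : vec -> vec.
Hypothesis HT : bounded_operator T.
Hypothesis HP : positive_operator T.
Variable e : nat -> vec.
Hypothesis He : real_orthonormal e.
Hypothesis Htot : real_total e.

Let l2_e k : l2 (e k).
Proof. apply He. Qed.
#[local] Hint Resolve l2_e l2_T : l2.

Let diag k := rinner (T (e k)) (e k).

Lemma norm_T_le_head_tail x K d : l2 x ->
  (forall M, (K <= M)%nat -> sum_f_R0 diag M - sum_f_R0 diag K <= d) ->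
  rinner (T x) (T x) <= bessel_sum e (T x) K + rinner (T x) x * d.
Proof.
  intros Hx Hd. apply Rle_plus_epsilon. intros eps Heps.
  destruct (parseval e He Htot (T x) ltac:(auto with l2) eps Heps) as [N HN].
  set (M := Nat.max N K).
  pose proof (bessel_sum_le_index e (T x) N M (Nat.le_max_l N K)) as HNM.
  assert (Htail : bessel_sum e (T x) M - bessel_sum e (T x) K <=
                  rinner (T x) x * (sum_f_R0 diag M - sum_f_R0 diag K)).
  { rewrite Rmult_minus_distr_l, !scal_sum.
    apply sum_f_R0_diff_le; [apply Nat.le_max_r|]. intros k.
    rewrite (Rmult_comm (diag k)). unfold coef, diag. apply positive_cauchy_schwarz; auto with l2. }
  pose proof (positive_rinner_ge_0 T HT HP x Hx) as Hpos.
  specialize (Hd M (Nat.le_max_r N K)).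
  assert (rinner (T x) x * (sum_f_R0 diag M - sum_f_R0 diag K) <= rinner (T x) x * d)
    by now apply Rmult_le_compat_l.
  lra.
Qed.

Lemma bessel_sum_T_cv0 (x : nat -> vec) K : real_orthonormal x ->
  is_lim_seq (fun n => bessel_sum e (T (x n)) K) 0.
Proof.
  intros Hx. pose proof (proj1 Hx) as Hxl.
  replace 0 with (sum_f_R0 (fun _ => 0) K) by (rewrite sum_cte; ring).
  apply (is_lim_seq_sum_f_R0 (fun n k => coef e (T (x n)) k * coef e (T (x n)) k)).
  intros k. apply (is_lim_seq_ext (fun n => coef x (T (e k)) n * coef x (T (e k)) n)).
  - intros n. unfold coef. rewrite positive_rinner_sym by auto with l2.
    reflexivity.
  - apply bessel_coef_sq_cv0; auto with l2.
Qed.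

Lemma essential_value_nonpos_of_bounded_diagonal B (x : nat -> vec) (c : R) :
  (forall N, sum_f_R0 diag N <= B) -> real_orthonormal x ->
  is_lim_seq (fun n => rinner (T (x n)) (x n)) c -> c <= 0.
Proof.
  intros HB Hx Hc. apply Rnot_lt_le. intros Hcpos. pose proof (proj1 Hx) as Hxl.
  assert (Hdiag : forall k, 0 <= diag k) by (intros k; apply positive_rinner_ge_0; auto with l2).
  destruct (bounded_sums_tail_small diag B Hdiag HB (c / 2)) as [K HK]; [lra|].
  assert (Hle : forall n, rinner (T (x n)) (x n) * rinner (T (x n)) (x n) <=
                          bessel_sum e (T (x n)) K + rinner (T (x n)) (x n) * (c / 2)).
  { intros n. eapply Rle_trans; [|apply norm_T_le_head_tail, (HK K (le_n K)); apply Hx].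
    pose proof (rinner_cauchy_schwarz (T (x n)) (x n)) as Hcs.
    rewrite (proj2 Hx n n) in Hcs. destruct (Nat.eq_dec n n); [|lia].
    rewrite Rmult_1_r in Hcs. apply Hcs; auto with l2. }
  assert (Hlim := is_lim_seq_le _ _ _ _ Hle (is_lim_seq_mult' _ _ _ _ Hc Hc)
    (is_lim_seq_plus' _ _ _ _ (bessel_sum_T_cv0 x K Hx)
       (is_lim_seq_mult' _ _ _ _ Hc (is_lim_seq_const (c / 2))))).
  simpl in Hlim. nra.
Qed.

End SummableDiagonal.

Lemma orthonormal_rinner u : orthonormal u -> forall j k,
  rinner (u j) (u k) = (if Nat.eq_dec j k then 1 else 0) /\ rinner (u j) (vmuli (u k)) = 0.
Proof.
  intros [Hl Ho] j k. destruct (inner_is_rinner _ _ _ (Hl j) (Hl k) (Ho j k)) as [Hre Him].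
  destruct (Nat.eq_dec j k); simpl in *; auto.
Qed.

Lemma orthonormal_real_orthonormal u : orthonormal u -> real_orthonormal u.
Proof. intros Hu. split; [apply Hu|]. intros j k. apply (orthonormal_rinner u Hu). Qed.

Definition realify (u : nat -> vec) (k : nat) : vec :=
  if Nat.even k then u (Nat.div2 k) else vmuli (u (Nat.div2 k)).

Lemma even_odd_div2 k :
  (Nat.even k = true /\ k = (2 * Nat.div2 k)%nat) \/
  (Nat.even k = false /\ k = S (2 * Nat.div2 k)).
Proof.
  destruct (Nat.Even_or_Odd k) as [[m ->]|[m ->]].
  - left. rewrite Nat.div2_double, Nat.even_mul. auto.
  - right. rewrite Nat.add_1_r, Nat.div2_succ_double, Nat.even_succ, Nat.odd_mul. auto.
Qed.

Lemma realify_real_orthonormal u : orthonormal u -> real_orthonormal (realify u).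
Proof.
  intros Hu. split.
  - intros k. unfold realify. destruct (Nat.even k); [|apply l2_vmuli]; apply Hu.
  - intros j k. unfold realify.
    destruct (orthonormal_rinner u Hu (Nat.div2 j) (Nat.div2 k)) as [Hre Him].
    destruct (even_odd_div2 j) as [[-> Ej]|[-> Ej]], (even_odd_div2 k) as [[-> Ek]|[-> Ek]].
    + rewrite Hre.
      destruct (Nat.eq_dec (Nat.div2 j) (Nat.div2 k)), (Nat.eq_dec j k); reflexivity || lia.
    + rewrite Him. destruct (Nat.eq_dec j k); reflexivity || lia.
    + rewrite rinner_vmuli_l, Him. destruct (Nat.eq_dec j k); [lia|ring].
    + rewrite rinner_vmuli, Hre.
      destruct (Nat.eq_dec (Nat.div2 j) (Nat.div2 k)), (Nat.eq_dec j k); reflexivity || lia.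
Qed.

Lemma realify_real_total u : orthonormal_basis u -> real_total (realify u).
Proof.
  intros [Hu Htot] y Hy Hperp. apply Htot; auto. intros k.
  assert (Hre : rinner y (u k) = 0).
  { specialize (Hperp (2 * k)%nat). unfold realify in Hperp.
    now rewrite Nat.even_mul, Nat.div2_double in Hperp. }
  assert (Him : rinner y (vmuli (u k)) = 0).
  { specialize (Hperp (S (2 * k))). unfold realify in Hperp.
    now rewrite Nat.even_succ, Nat.odd_mul, Nat.div2_succ_double in Hperp. }
  pose proof (inner_is_of_rinner y (u k) Hy (proj1 Hu k)) as H.
  now rewrite Hre, Him in H.
Qed.

Lemma rinner_T_realify T u : bounded_operator T -> orthonormal u -> forall k,
  rinner (T (realify u k)) (realify u k) = rinner (T (u (Nat.div2 k))) (u (Nat.div2 k)).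
Proof.
  intros HT Hu k. unfold realify. destruct (Nat.even k); auto.
  rewrite (T_vmuli T HT) by apply Hu. apply rinner_vmuli.
Qed.

Lemma sum_f_R0_div2 (a b : nat -> R) : (forall k, a k = b (Nat.div2 k)) ->
  forall N, sum_f_R0 a (S (2 * N)) = 2 * sum_f_R0 b N.
Proof.
  intros Hab N. induction N as [|N IH].
  - simpl. rewrite !Hab. simpl. ring.
  - replace (S (2 * S N)) with (S (S (S (2 * N)))) by lia.
    rewrite tech5, tech5, IH, tech5, (Hab (S (S (2 * N)))), (Hab (S (S (S (2 * N))))).
    replace (S (S (2 * N))) with (2 * S N)%nat by lia.
    rewrite Nat.div2_double, Nat.div2_succ_double. ring.
Qed.

Lemma essential_numerical_range_nonpos_of_bounded_diagonal T u B c :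
  bounded_operator T -> positive_operator T -> orthonormal_basis u ->
  (forall N, sum_f_R0 (fun k => rinner (T (u k)) (u k)) N <= B) ->
  essential_numerical_range T (c, 0) -> c <= 0.
Proof.
  intros HT HP Hu HB [x [Hx [a [Ha [Hre _]]]]].
  apply (essential_value_nonpos_of_bounded_diagonal T HT HP (realify u)
           (realify_real_orthonormal u (proj1 Hu)) (realify_real_total u Hu) (2 * B) x c).
  - intros N. eapply Rle_trans.
    + apply (sum_f_R0_le_index (fun k => rinner (T (realify u k)) (realify u k)) N (S (2 * N)));
        [|lia].
      intros k. apply (positive_rinner_ge_0 T HT HP), (realify_real_orthonormal u (proj1 Hu)).
    + rewrite (sum_f_R0_div2 _ (fun k => rinner (T (u k)) (u k))
                 (rinner_T_realify T u HT (proj1 Hu))).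
      specialize (HB N). lra.
  - now apply orthonormal_real_orthonormal.
  - apply (is_lim_seq_ext (fun n => Cre (a n))); [|now apply is_lim_seq_Reals].
    intros n. pose proof (proj1 Hx n) as Hxn.
    exact (proj1 (inner_is_rinner _ _ _ (l2_T T HT _ Hxn) Hxn (Ha n))).
Qed.

Theorem proposition4p6 :
  forall (T : vec -> vec),
    bounded_operator T ->
    positive_operator T ->
    forall lam : nat -> R,
      (forall k, real_interior (essential_numerical_range T) (lam k)) ->
      diagonal_seq T (fun k => (lam k, 0)) ->
      cv_infty (fun n => sum_f_R0 lam n).
Proof.
  intros T HT HP lam Hint [u [Hu Hdiag]].
  assert (Hlam : forall k, rinner (T (u k)) (u k) = lam k).
  { intros k. pose proof (proj1 (proj1 Hu) k) as Huk.
    symmetry. exact (proj1 (inner_is_rinner _ _ _ (l2_T T HT _ Huk) Huk (Hdiag k))). }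
  assert (Hlam0 : forall k, 0 <= lam k).
  { intros k. rewrite <- Hlam. apply (positive_rinner_ge_0 T HT HP), Hu. }
  destruct (growing_cv_infty_or_bounded (sum_f_R0 lam)) as [|[B HB]]; auto.
  { intros n. simpl. specialize (Hlam0 (S n)). lra. }
  destruct (Hint 0%nat) as [eps [Heps Hball]].
  assert (Hc : lam 0%nat + eps / 2 <= 0).
  { apply (essential_numerical_range_nonpos_of_bounded_diagonal T u B); auto.
    - intros N. rewrite (sum_eq _ lam) by auto. apply HB.
    - apply Hball. rewrite Rabs_pos_eq; lra. }
  specialize (Hlam0 0%nat). lra.
Qed.
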